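(* Let $a>0$, $n\ge2$, $\lambda=\frac{\pi-2}{a(\pi-4)}$, $s=\frac{\sqrt{2\pi}}{a(\pi-4)}$, $k=\frac{2a}{\sqrt{2\pi}}$, $t=\frac{2}{\sqrt{2\pi}a}$, and let $C=(c_{ij})$ be real with $\sum_i c_{ij}=1$ for all $j$. Suppose real numbers $\rho^i_\infty,q^i_\infty,\gamma^i$ satisfy for all $i$ \[ q^i_\infty-\gamma^i+k\rho^i_\infty=-\sum_jc_{ij}\big(q^j_\infty+\gamma^j-k\rho^j_\infty\big), \] \[ \rho^i_\infty+(\lambda+s)\gamma^i+t\,q^i_\infty=\sum_jc_{ij}\big(\rho^j_\infty+(s-\lambda)\gamma^j-t\,q^j_\infty\big). \] Then $\sum_iq^i_\infty=0$ and $\sum_i\gamma^i=0$. If moreover the node is uniform ($c_{ij}=\frac1{n-1}$ for $i\neq j$, $c_{ii}=0$), then with $m=\frac{n-2}{n}$ each of the quantities \[ m\,q^i_\infty-\gamma^i+k\rho^i_\infty,\qquad \rho^i_\infty+\Big(m+\tfrac{\sqrt{2\pi}}{\pi-2}\Big)\lambda\gamma^i+t\,m\,q^i_\infty,\qquad \rho^i_\infty+\frac{m}{a}\,\frac{4+m\sqrt{2\pi}}{\sqrt{2\pi}+2m}\,q^i_\infty \] is independent of $i$.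
   Context: These equations come from integrating the kinetic coupling $f^i(0,v)=\sum_jc_{ij}f^j(0,-v)$, $v>0$, against $1$ and $v$ over half-ranges and expressing the half-moments at the node through the asymptotic states and layer amplitudes $\gamma^i$ of the half-moment half-space problems (unbounded velocities, Maxwellian $M(v)=(2\pi a^2)^{-1/2}e^{-v^2/(2a^2)}$) on each edge. *)

From Stdlib Require Import Reals List.
Open Scope R_scope.

Definition sumR (n : nat) (f : nat -> R) : R :=
  fold_right Rplus 0 (map f (seq 0 n)).

(** Summing a coupling condition over the edges only sees the column sums of
    [C], which are all [1]; the two half-moment conditions thus collapse to
    [2 Q = 0] and [2 lam G + 2 t Q = 0] for the totals [Q] and [G].  At a
    uniform node [sum_j c_ij x_j = (X - x_i) / (n - 1)], so once [Q = G = 0]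
    each condition expresses a linear form in [(rho_i, q_i, gam_i)] through
    the total [sum_i rho_i] alone: these are the first two invariants, and the
    third is a combination of them with the nonzero weight
    [1 + (m lam + s) k = (pi - 2) (sqrt(2 pi) + 2 m) / (sqrt(2 pi) (pi - 4))]. *)

From Stdlib Require Import Reals List Lra Lia.
Open Scope R_scope.

Lemma PI_lt_4 : PI < 4.
Proof.
  destruct (PI_ineq 1) as [_ H]; simpl in H; unfold tg_alt, PI_tg in H; simpl in H.
  lra.
Qed.

Lemma sumR_S n f : sumR (S n) f = sumR n f + f n.
Proof.
  unfold sumR; rewrite seq_S, map_app, fold_right_app; simpl.
  induction (map f (seq 0 n)) as [|x l IH]; simpl; lra.
Qed.

Lemma eq_sumR n f g : (forall i, (i < n)%nat -> f i = g i) -> sumR n f = sumR n g.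
Proof.
  induction n as [|n IH]; intros H; [reflexivity|].
  rewrite !sumR_S, IH, H; auto.
Qed.

Lemma sumR_const0 n : sumR n (fun _ => 0) = 0.
Proof. induction n as [|n IH]; [reflexivity|]; rewrite sumR_S, IH; lra. Qed.

Lemma sumR_add n f g : sumR n (fun i => f i + g i) = sumR n f + sumR n g.
Proof. induction n as [|n IH]; [cbn; lra|]; rewrite !sumR_S, IH; lra. Qed.

Lemma sumR_scale n x f : sumR n (fun i => x * f i) = x * sumR n f.
Proof. induction n as [|n IH]; [cbn; lra|]; rewrite !sumR_S, IH; lra. Qed.

Lemma sumR_lincomb3 n f g h x y z F :
  (forall i, F i = x * f i + y * g i + z * h i) ->
  sumR n F = x * sumR n f + y * sumR n g + z * sumR n h.
Proof.
  intros HF; induction n as [|n IH]; [cbn; lra|].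
  rewrite !sumR_S, IH, HF; lra.
Qed.

Lemma sumR_exchange m n f :
  sumR m (fun i => sumR n (f i)) = sumR n (fun j => sumR m (fun i => f i j)).
Proof.
  induction m as [|m IH].
  - rewrite (eq_sumR n _ (fun _ => 0)), sumR_const0 by reflexivity; reflexivity.
  - rewrite sumR_S, IH, <- sumR_add; apply eq_sumR; intros j _.
    rewrite sumR_S; reflexivity.
Qed.

Lemma sumR_delta n i y : (i < n)%nat ->
  sumR n (fun j => if Nat.eqb i j then y j else 0) = y i.
Proof.
  induction n as [|n IH]; intros Hi; [lia|].
  rewrite sumR_S; destruct (Nat.eq_dec i n) as [->|Hne].
  - rewrite Nat.eqb_refl, (eq_sumR n _ (fun _ => 0)), sumR_const0; [lra|].
    intros j Hj; destruct (Nat.eqb_spec n j); [lia|reflexivity].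
  - rewrite IH by lia; destruct (Nat.eqb_spec i n); [lia|lra].
Qed.

Lemma sumR_offdiag n i d x : (i < n)%nat ->
  sumR n (fun j => (if Nat.eqb i j then 0 else d) * x j) = d * (sumR n x - x i).
Proof.
  intros Hi.
  rewrite (eq_sumR n _ (fun j => d * x j + -1 * (if Nat.eqb i j then d * x j else 0))).
  - rewrite sumR_add, !sumR_scale, sumR_delta by exact Hi; ring.
  - intros j _; destruct (Nat.eqb i j); ring.
Qed.

Section Node.

Variables (n : nat) (c : nat -> nat -> R).

Lemma sumR_stochastic_mix x :
  (forall j, (j < n)%nat -> sumR n (fun i => c i j) = 1) ->
  sumR n (fun i => sumR n (fun j => c i j * x j)) = sumR n x.
Proof.
  intros Hcol; rewrite sumR_exchange; apply eq_sumR; intros j Hj.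
  rewrite (eq_sumR n _ (fun i => x j * c i j)) by (intros; ring).
  rewrite sumR_scale, Hcol by exact Hj; ring.
Qed.

Lemma uniform_node_balance u v :
  (2 <= n)%nat ->
  (forall i j, (i < n)%nat -> (j < n)%nat ->
     c i j = if Nat.eqb i j then 0 else 1 / (INR n - 1)) ->
  (forall i, (i < n)%nat -> u i = sumR n (fun j => c i j * v j)) ->
  forall i, (i < n)%nat -> (INR n - 1) * u i + v i = sumR n v.
Proof.
  intros Hn Hu Huv i Hi.
  assert (Hn1 : 1 < INR n) by (apply lt_1_INR; lia).
  rewrite Huv by exact Hi.
  rewrite (eq_sumR n _ (fun j => (if Nat.eqb i j then 0 else 1 / (INR n - 1)) * v j))
    by (intros j Hj; rewrite Hu; auto).
  rewrite sumR_offdiag by exact Hi.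
  field; lra.
Qed.

Variables (rho q gam : nat -> R) (lam s k t : R).

Hypothesis coupling_first : forall i, (i < n)%nat ->
  q i - gam i + k * rho i = - sumR n (fun j => c i j * (q j + gam j - k * rho j)).
Hypothesis coupling_second : forall i, (i < n)%nat ->
  rho i + (lam + s) * gam i + t * q i =
    sumR n (fun j => c i j * (rho j + (s - lam) * gam j - t * q j)).

Lemma node_conserves_moments :
  (forall j, (j < n)%nat -> sumR n (fun i => c i j) = 1) -> lam <> 0 ->
  sumR n q = 0 /\ sumR n gam = 0.
Proof.
  intros Hcol Hlam.
  assert (Hfirst : sumR n (fun i => q i - gam i + k * rho i) =
                   - sumR n (fun i => q i + gam i - k * rho i)).
  { transitivity (sumR n (fun i => -1 * sumR n (fun j => c i j * (q j + gam j - k * rho j)))).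
    - apply eq_sumR; intros i Hi; rewrite coupling_first by exact Hi; ring.
    - rewrite sumR_scale, sumR_stochastic_mix by exact Hcol; ring. }
  assert (Hsecond : sumR n (fun i => rho i + (lam + s) * gam i + t * q i) =
                    sumR n (fun i => rho i + (s - lam) * gam i - t * q i)).
  { rewrite <- (sumR_stochastic_mix (fun j => rho j + (s - lam) * gam j - t * q j))
      by exact Hcol.
    apply eq_sumR; exact coupling_second. }
  rewrite (sumR_lincomb3 n q gam rho 1 (-1) k),
    (sumR_lincomb3 n q gam rho 1 1 (-k) (fun i => q i + gam i - k * rho i))
    in Hfirst by (intros; ring).
  rewrite (sumR_lincomb3 n rho gam q 1 (lam + s) t),
    (sumR_lincomb3 n rho gam q 1 (s - lam) (-t) (fun i => rho i + (s - lam) * gam i - t * q i))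
    in Hsecond by (intros; ring).
  assert (HQ : sumR n q = 0) by lra.
  split; [exact HQ|].
  rewrite HQ in Hsecond.
  apply (Rmult_eq_reg_l lam); [nra | exact Hlam].
Qed.

Hypothesis n_ge2 : (2 <= n)%nat.
Hypothesis c_uniform : forall i j, (i < n)%nat -> (j < n)%nat ->
  c i j = if Nat.eqb i j then 0 else 1 / (INR n - 1).
Hypothesis q_total : sumR n q = 0.
Hypothesis gam_total : sumR n gam = 0.

Let m := (INR n - 2) / INR n.

Lemma uniform_node_first_invariant i : (i < n)%nat ->
  m * q i - gam i + k * rho i = k * sumR n rho / INR n.
Proof.
  intros Hi.
  assert (Hn : 2 <= INR n) by (apply (le_INR 2); exact n_ge2).
  assert (Hcoupling : forall i, (i < n)%nat -> - (q i - gam i + k * rho i) =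
            sumR n (fun j => c i j * (q j + gam j - k * rho j)))
    by (intros i' Hi'; rewrite coupling_first by exact Hi'; ring).
  pose proof (uniform_node_balance _ _ n_ge2 c_uniform Hcoupling i Hi) as Hbal.
  rewrite (sumR_lincomb3 n q gam rho 1 1 (-k)), q_total, gam_total in Hbal
    by (intros; ring).
  apply (Rmult_eq_reg_l (INR n)); [|lra].
  replace (INR n * (m * q i - gam i + k * rho i))
    with ((INR n - 2) * q i - INR n * gam i + INR n * k * rho i) by (unfold m; field; lra).
  replace (INR n * (k * sumR n rho / INR n)) with (k * sumR n rho) by (field; lra).
  lra.
Qed.

Lemma uniform_node_second_invariant i : (i < n)%nat ->
  rho i + (m * lam + s) * gam i + t * m * q i = sumR n rho / INR n.
Proof.
  intros Hi.
  assert (Hn : 2 <= INR n) by (apply (le_INR 2); exact n_ge2).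
  pose proof (uniform_node_balance (fun i => rho i + (lam + s) * gam i + t * q i)
                (fun j => rho j + (s - lam) * gam j - t * q j) n_ge2 c_uniform
                coupling_second i Hi) as Hbal.
  rewrite (sumR_lincomb3 n rho gam q 1 (s - lam) (-t)), q_total, gam_total in Hbal
    by (intros; ring).
  apply (Rmult_eq_reg_l (INR n)); [|lra].
  replace (INR n * (rho i + (m * lam + s) * gam i + t * m * q i))
    with (INR n * rho i + ((INR n - 2) * lam + INR n * s) * gam i + t * (INR n - 2) * q i)
    by (unfold m; field; lra).
  replace (INR n * (sumR n rho / INR n)) with (sumR n rho) by (field; lra).
  lra.
Qed.

End Node.

Section HalfSpaceConstants.

Variables (P sg a : R).
Hypotheses (sg_sq : sg * sg = 2 * P) (sg_pos : 0 < sg) (a_pos : 0 < a)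
  (P_neq2 : P <> 2) (P_neq4 : P <> 4).

Let lam := (P - 2) / (a * (P - 4)).
Let s := sg / (a * (P - 4)).
Let k := 2 * a / sg.
Let t := 2 / (sg * a).

Lemma half_space_lam_neq0 : lam <> 0.
Proof.
  unfold lam; apply Rmult_integral_contrapositive; split; [lra|].
  apply Rinv_neq_0_compat, Rmult_integral_contrapositive; split; lra.
Qed.

Lemma half_space_second_coef m : (m + sg / (P - 2)) * lam = m * lam + s.
Proof. unfold lam, s; field; repeat split; lra. Qed.

Lemma half_space_third_invariant m r x g : 0 <= m ->
  r + m / a * ((4 + m * sg) / (sg + 2 * m)) * x =
  ((r + (m * lam + s) * g + t * m * x) + (m * lam + s) * (m * x - g + k * r))
    / (1 + (m * lam + s) * k).
Proof.
  intros Hm.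
  assert (HP : P = sg * sg / 2) by lra.
  assert (Hweight : 1 + (m * lam + s) * k = (P - 2) * (sg + 2 * m) / (sg * (P - 4))).
  { unfold lam, s, k; field; repeat split; lra. }
  rewrite Hweight; unfold lam, s, k, t; subst P.
  field; repeat split; lra.
Qed.

End HalfSpaceConstants.

Theorem mainTheorem10 (a : R) (n : nat) (c : nat -> nat -> R)
  (rho q gam : nat -> R) :
  0 < a -> (2 <= n)%nat ->
  (forall j, (j < n)%nat -> sumR n (fun i => c i j) = 1) ->
  let lam := (PI - 2) / (a * (PI - 4)) in
  let s := sqrt (2 * PI) / (a * (PI - 4)) in
  let k := 2 * a / sqrt (2 * PI) in
  let t := 2 / (sqrt (2 * PI) * a) in
  (forall i, (i < n)%nat ->
     q i - gam i + k * rho i =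
       - sumR n (fun j => c i j * (q j + gam j - k * rho j))) ->
  (forall i, (i < n)%nat ->
     rho i + (lam + s) * gam i + t * q i =
       sumR n (fun j => c i j * (rho j + (s - lam) * gam j - t * q j))) ->
  (sumR n q = 0 /\ sumR n gam = 0) /\
  ((forall i j, (i < n)%nat -> (j < n)%nat ->
      c i j = if Nat.eqb i j then 0 else 1 / (INR n - 1)) ->
   let m := (INR n - 2) / INR n in
   forall i j, (i < n)%nat -> (j < n)%nat ->
     m * q i - gam i + k * rho i = m * q j - gam j + k * rho j /\
     rho i + (m + sqrt (2 * PI) / (PI - 2)) * lam * gam i + t * m * q i =
       rho j + (m + sqrt (2 * PI) / (PI - 2)) * lam * gam j + t * m * q j /\
     rho i + m / a * ((4 + m * sqrt (2 * PI)) / (sqrt (2 * PI) + 2 * m)) * q i =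
       rho j + m / a * ((4 + m * sqrt (2 * PI)) / (sqrt (2 * PI) + 2 * m)) * q j).
Proof.
  intros Ha Hn Hcol lam s k t Hfirst Hsecond.
  pose proof PI_lt_4 as HP4; pose proof PI2_3_2 as HP3.
  assert (Hsg_pos : 0 < sqrt (2 * PI)) by (apply sqrt_lt_R0; lra).
  assert (Hsg_sq : sqrt (2 * PI) * sqrt (2 * PI) = 2 * PI) by (apply sqrt_sqrt; lra).
  assert (Hlam : lam <> 0) by (apply half_space_lam_neq0; lra).
  destruct (node_conserves_moments n c rho q gam lam s k t Hfirst Hsecond Hcol Hlam)
    as [HQ HG].
  split; [split; assumption|].
  intros Hu m i j Hi Hj.
  assert (Hm : 0 <= m).
  { assert (Hn2 : 2 <= INR n) by exact (le_INR 2 n Hn).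
    apply Rmult_le_pos; [| left; apply Rinv_0_lt_compat]; lra. }
  pose proof (uniform_node_first_invariant n c rho q gam k Hfirst Hn Hu HQ HG) as Hinv1.
  pose proof (uniform_node_second_invariant n c rho q gam lam s t Hsecond Hn Hu HQ HG)
    as Hinv2.
  fold m in Hinv1, Hinv2.
  rewrite !(half_space_second_coef PI (sqrt (2 * PI)) a) by lra.
  rewrite (half_space_third_invariant PI _ a Hsg_sq Hsg_pos Ha) with (g := gam i),
    (half_space_third_invariant PI _ a Hsg_sq Hsg_pos Ha) with (g := gam j) by lra.
  fold lam s k t.
  rewrite !Hinv1, !Hinv2 by assumption.
  repeat split; reflexivity.
Qed.
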